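(* Let $d\ge 2$ be an even integer, $p\ge 0$ an integer, and $M\ge 1$ an integer with $2M+1\ge d+p+1$. Let $\gamma:[0,\pi]\to[0,\infty)$ be an integrable weighting function that is positive on a subset of $[0,\pi]$ of positive measure. For $\mathbf a=(a_{-M},\dots,a_M)\in\mathbb R^{2M+1}$ define the spectral error $$e(\eta)=\sum_{m=-M}^{M}a_m e^{jm\eta}-(j\eta)^d,\qquad \eta\in[0,\pi],\ j=\sqrt{-1}.$$ Let $\mathbf a^\ast$ be a minimizer of $$\int_0^\pi \gamma(\eta)\,|e(\eta)|^2\,d\eta$$ over all $\mathbf a\in\mathbb R^{2M+1}$ satisfying the order-of-accuracy constraints $$\sum_{m=-M}^{M} m^q a_m=\begin{cases}0,& q\neq d,\\ d!,& q=d,\end{cases}\qquad q=0,1,\dots,d+p .$$ Then the spectral error of $\mathbf a^\ast$ satisfies $\operatorname{Im}[e(\eta)]=0$ for all $\eta\in[0,\pi]$ (equivalently $\sum_m a^\ast_m\sin(m\eta)\equiv 0$).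
   Context: This concerns explicit finite difference approximations $f^{(d)}(x_i)\approx (\Delta x)^{-d}\sum_{m=-M}^{M}a_m f(x_i+m\Delta x)$ of the $d$-th derivative on a uniform grid with spacing $\Delta x$; $\eta=k\Delta x$ is the normalized wavenumber. The constraints express that the approximation has truncation error of order $p+1$. Here $0^0=1$. *)

From HB Require Import structures.
From mathcomp Require Import all_boot all_order all_algebra.
From mathcomp Require Import all_classical all_reals all_analysis.
From mathcomp Require Import complex.
Set Implicit Arguments. Unset Strict Implicit. Unset Printing Implicit Defensive.
Import Order.TTheory GRing.Theory Num.Theory.
Import numFieldNormedType.Exports.
Local Open Scope ring_scope.
Local Open Scope classical_set_scope.
Local Open Scope complex_scope.

(* Stencil index i : 'I_(2M+1) corresponds to offset m = i - M. *)
Definition offset (R : realType) (M : nat) (i : 'I_(2 * M + 1)) : R :=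
  (nat_of_ord i)%:R - M%:R.
Arguments offset {R} M i.

Definition cexpj (R : realType) (t : R) : R[i] := (cos t) +i* (sin t).

Definition spec_err (R : realType) (M d : nat) (a : 'I_(2 * M + 1) -> R)
  (eta : R) : R[i] :=
  \sum_(i < 2 * M + 1) (a i)%:C * cexpj (offset M i * eta)
  - ('i * eta%:C) ^+ d.
Arguments spec_err {R} M d a eta.

Definition spec_err_abs2 (R : realType) (M d : nat) (a : 'I_(2 * M + 1) -> R)
  (eta : R) : R :=
  (complex.Re (spec_err M d a eta)) ^+ 2 + (complex.Im (spec_err M d a eta)) ^+ 2.
Arguments spec_err_abs2 {R} M d a eta.

Definition I0pi (R : realType) : set R := [set x : R | 0 <= x <= pi].
Arguments I0pi R : clear implicits.

Definition objective (R : realType) (M d : nat) (gamma : R -> R)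
  (a : 'I_(2 * M + 1) -> R) : \bar R :=
  (\int[lebesgue_measure]_(x in I0pi R)
     (gamma x * spec_err_abs2 M d a x)%:E)%E.
Arguments objective {R} M d gamma a.

(* Order-of-accuracy constraints, q = 0..d+p, with 0^0 = 1. *)
Definition accuracy_constraints (R : realType) (M d p : nat)
  (a : 'I_(2 * M + 1) -> R) : Prop :=
  forall q : nat, (q <= d + p)%N ->
    \sum_(i < 2 * M + 1) offset M i ^+ q * a i
      = (if q == d then (d`!)%:R else 0).
Arguments accuracy_constraints {R} M d p a.

(* Replacing a coefficient vector a by its symmetric part (a_m + a_(-m))/2
   preserves the accuracy constraints (d being even, every odd moment is
   required to vanish, as it does for a symmetric vector), keeps Re e and
   kills Im e = sum_m a_m sin (m eta).  Hence a
   minimizer has  int gamma (Im e)^2 = 0, so Im e vanishes almost everywhere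
   on {gamma > 0}, a set of positive measure.  But
   Im e (eta) = sin eta Q (cos eta) for a polynomial Q built from Chebyshev
   polynomials, and such a function has only finitely many zeros in [0, pi]
   unless Q = 0. *)

From HB Require Import structures.
From mathcomp Require Import all_boot all_order all_algebra.
From mathcomp Require Import all_classical all_reals all_analysis.
From mathcomp Require Import complex polyrcf ring measurable_realfun.
Set Implicit Arguments. Unset Strict Implicit. Unset Printing Implicit Defensive.
Import Order.TTheory GRing.Theory Num.Theory.
Import numFieldNormedType.Exports.
Local Open Scope ring_scope.
Local Open Scope classical_set_scope.
Local Open Scope complex_scope.

Section ComplexExponential.
Variable R : realType.

Lemma sum_real_cexpj (I : Type) (r : seq I) (c t : I -> R) :
  \sum_(i <- r) (c i)%:C * cexpj (t i)
  = (\sum_(i <- r) c i * cos (t i)) +i* (\sum_(i <- r) c i * sin (t i)).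
Proof.
elim: r => [|i r IHr]; first by rewrite !big_nil.
by rewrite !big_cons IHr /cexpj /=; congr (_ +i* _); ring.
Qed.

Lemma expr_imul_even (d : nat) (x : R) : ~~ odd d ->
  ('i * x%:C) ^+ d = ((-1) ^+ d./2 * x ^+ d)%:C.
Proof.
move=> ev; have iXd : 'i ^+ d = (-1) ^+ d./2 :> R[i].
  by rewrite -[in LHS](odd_double_half d) (negbTE ev) -muln2 mulnC exprM sqr_i.
by rewrite exprMn iXd rmorphM rmorphXn rmorphN1 /= rmorphXn.
Qed.

End ComplexExponential.

Section StencilSymbol.
Variables (R : realType) (M : nat).
Implicit Types (a : 'I_(2 * M + 1) -> R) (x : R).

Definition stencil_cos a x := \sum_(i < 2 * M + 1) a i * cos (offset M i * x).
Definition stencil_sin a x := \sum_(i < 2 * M + 1) a i * sin (offset M i * x).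
Definition spec_err_re (d : nat) a x := stencil_cos a x - (-1) ^+ d./2 * x ^+ d.

Lemma spec_errE d a x : ~~ odd d ->
  spec_err M d a x = spec_err_re d a x +i* stencil_sin a x.
Proof.
move=> ev; rewrite /spec_err sum_real_cexpj expr_imul_even //.
by apply/eqP; rewrite eq_complex /= oppr0 addr0 !eqxx.
Qed.

Lemma spec_err_abs2E d a x : ~~ odd d ->
  spec_err_abs2 M d a x = spec_err_re d a x ^+ 2 + stencil_sin a x ^+ 2.
Proof. by move=> ev; rewrite /spec_err_abs2 spec_errE. Qed.

End StencilSymbol.

Section Symmetrization.
Variables (R : realType) (M : nat).
Implicit Types (a : 'I_(2 * M + 1) -> R) (x : R).

Lemma offset_rev_ord (i : 'I_(2 * M + 1)) :
  offset M (rev_ord i) = - offset M i :> R.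
Proof.
rewrite /offset /=; move: (nat_of_ord i) (ltn_ord i) => k ltkM.
rewrite natrB // -addn1 !natrD; ring.
Qed.

Definition symmetrize a (i : 'I_(2 * M + 1)) := (a i + a (rev_ord i)) / 2.

Lemma sum_symmetrize a (f : R -> R) :
  \sum_(i < 2 * M + 1) symmetrize a i * f (offset M i)
  = (\sum_(i < 2 * M + 1) a i * (f (offset M i) + f (- offset M i))) / 2.
Proof.
have sum_rev : \sum_(i < 2 * M + 1) a (rev_ord i) * f (offset M i)
             = \sum_(i < 2 * M + 1) a i * f (- offset M i).
  rewrite (reindex_inj rev_ord_inj) /=.
  by apply: eq_bigr => i _; rewrite rev_ordK offset_rev_ord.
transitivity ((\sum_(i < 2 * M + 1) a i * f (offset M i)
   + \sum_(i < 2 * M + 1) a (rev_ord i) * f (offset M i)) / 2).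
  rewrite -big_split mulr_suml; apply: eq_bigr => i _.
  by rewrite /symmetrize mulrAC mulrDl.
by rewrite sum_rev -big_split; under [in RHS]eq_bigr do rewrite mulrDr.
Qed.

Lemma stencil_cos_symmetrize a x : stencil_cos (symmetrize a) x = stencil_cos a x.
Proof.
rewrite /stencil_cos (sum_symmetrize a (fun o => cos (o * x))).
under eq_bigr do rewrite mulNr cosN -mulr2n mulrnAr -mulr_natr.
by rewrite -mulr_suml mulfK ?pnatr_eq0.
Qed.

Lemma stencil_sin_symmetrize a x : stencil_sin (symmetrize a) x = 0.
Proof.
rewrite /stencil_sin (sum_symmetrize a (fun o => sin (o * x))).
by under eq_bigr do rewrite mulNr sinN subrr mulr0; rewrite big1 ?mul0r.
Qed.

Lemma accuracy_constraints_symmetrize d p a : ~~ odd d ->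
  accuracy_constraints M d p a -> accuracy_constraints M d p (symmetrize a).
Proof.
move=> ev acc q le_q.
under eq_bigr do rewrite mulrC.
rewrite (sum_symmetrize a (fun o => o ^+ q)).
have -> : \sum_(i < 2 * M + 1) a i * (offset M i ^+ q + (- offset M i) ^+ q)
        = (1 + (-1) ^+ q) * \sum_(i < 2 * M + 1) offset M i ^+ q * a i.
  rewrite mulr_sumr; apply: eq_bigr => i _.
  by rewrite (exprNn (offset M i)); ring.
rewrite acc // -signr_odd; have [odd_q|_] := boolP (odd q).
  have /negbTE -> : q != d by apply: contraNneq ev => <-.
  by rewrite subrr !mul0r.
by rewrite expr0; field.
Qed.

End Symmetrization.

Section Chebyshev.
Variable R : realType.

(* The pair (T_k, U_(k-1)) of Chebyshev polynomials; the recursion is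
   e^(i(k+1)x) = e^(ikx) e^(ix) with sin^2 x = 1 - cos^2 x. *)
Fixpoint chebyshev (k : nat) : {poly R} * {poly R} :=
  if k is k'.+1 then
    ((chebyshev k').1 * 'X - (1 - 'X ^+ 2) * (chebyshev k').2,
     (chebyshev k').2 * 'X + (chebyshev k').1)
  else (1, 0).

Lemma cos_sin_natmul (k : nat) (x : R) :
  cos (k%:R * x) = (chebyshev k).1.[cos x] /\
  sin (k%:R * x) = sin x * (chebyshev k).2.[cos x].
Proof.
elim: k => [|k [IHcos IHsin]] /=; first by rewrite mul0r cos0 sin0 !hornerE.
rewrite mulrSr mulrDl mul1r cosD sinD IHcos IHsin !hornerE -sin2cos2.
by split; ring.
Qed.

Lemma sin_intmul (z : int) (x : R) :
  sin (z%:~R * x) = sin x * ((sgz z)%:~R * (chebyshev `|z|%N).2.[cos x]).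
Proof.
case: z => [[|n]|n]; first by rewrite mul0r sin0 /= mul0r mulr0.
  by have [_ ->] := cos_sin_natmul n.+1 x; rewrite mul1r.
rewrite NegzE mulrNz mulNr sinN /=.
by have [_ ->] := cos_sin_natmul n.+1 x; rewrite mulN1r mulrN.
Qed.

End Chebyshev.

Section StencilSinPoly.
Variables (R : realType) (M : nat).

Definition int_offset (i : 'I_(2 * M + 1)) : int := i%:Z - M%:Z.

Lemma offsetE (i : 'I_(2 * M + 1)) : offset M i = (int_offset i)%:~R :> R.
Proof. by rewrite /offset /int_offset intrB !pmulrn. Qed.

Definition stencil_sin_poly (a : 'I_(2 * M + 1) -> R) : {poly R} :=
  \sum_(i < 2 * M + 1)
    (a i * (sgz (int_offset i))%:~R) *: (chebyshev R `|int_offset i|%N).2.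

Lemma stencil_sinE (a : 'I_(2 * M + 1) -> R) x :
  stencil_sin a x = sin x * (stencil_sin_poly a).[cos x].
Proof.
rewrite /stencil_sin /stencil_sin_poly horner_sum mulr_sumr.
by apply: eq_bigr => i _; rewrite offsetE sin_intmul hornerZ; ring.
Qed.

End StencilSinPoly.

Lemma sin_poly_cos_zeros_finite (R : realType) (P : {poly R}) : P != 0 ->
  finite_set [set x | I0pi R x /\ sin x * P.[cos x] = 0].
Proof.
move=> P_neq0; set Q := ('X^2 - 1) * P.
have Q_neq0 : Q != 0 by rewrite mulf_neq0 // monic_neq0 // monicXnsubC.
apply: sub_finite_set (finite_image acos (finite_seq (roots Q (-2) 2))).
move=> x [Ix sinP0]; exists (cos x); last by rewrite cosK // in_itv.
apply: root_in_roots => //.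
  rewrite in_itv /= (lt_le_trans _ (cos_geN1 x)) ?(le_lt_trans (cos_le1 x)) //.
  - by rewrite ltr1n.
  - by rewrite ltrN2 ltr1n.
apply/rootP.
have -> : Q.[cos x] = - sin x ^+ 2 * P.[cos x].
  by rewrite !hornerE sin2cos2; ring.
by rewrite expr2 mulNr -mulrA sinP0 mulr0 oppr0.
Qed.

Lemma weighted_square_integral_eq0 (d : measure_display) (T : measurableType d)
    (R : realType) (mu : {measure set T -> \bar R}) (D : set T) (g h : T -> R) :
  measurable D -> measurable_fun D g -> measurable_fun D h ->
  (forall x, D x -> 0 <= g x) ->
  (\int[mu]_(x in D) (g x * h x ^+ 2)%:E = 0)%E ->
  exists N, [/\ measurable N, mu N = 0%E &
                D `&` [set x | 0 < g x] `<=` N `|` [set x | h x = 0]].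
Proof.
move=> mD mg mh g_ge0 int0.
pose f x := (g x * h x ^+ 2)%:E.
have mf : measurable_fun D f.
  by apply/measurable_EFinP/measurable_funM => //; exact: measurable_funX.
have /(ae_eq_integral_abs mu mD mf).1 :
    (\int[mu]_(x in D) `|f x| = 0)%E.
  rewrite -int0; apply: eq_integral => x /[!inE] Dx.
  by rewrite gee0_abs // lee_fin mulr_ge0 ?g_ge0 ?sqr_ge0.
case=> N [mN N0 subN]; exists N; split => // x [Dx gx_gt0].
have [hx0|hx_neq0] := eqVneq (h x) 0; [by right | left].
apply: subN => /(_ Dx) [] /eqP.
by rewrite mulf_eq0 gt_eqF //= sqrf_eq0 (negbTE hx_neq0).
Qed.

Lemma lebesgue_measure_sub_null_countable (R : realType) (A N Z : set R) :
  measurable A -> measurable N -> lebesgue_measure N = 0%E -> countable Z ->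
  A `<=` N `|` Z -> lebesgue_measure A = 0%E.
Proof.
move=> mA mN N0 cZ subA.
have mZ : measurable Z.
  by apply: countable_measurable => // t; exact: measurable_set1.
have : (lebesgue_measure A <= lebesgue_measure N + lebesgue_measure Z)%E.
  apply: le_trans (measureU2 lebesgue_measure mN mZ).
  by apply: le_measure => //; rewrite inE //; exact: measurableU.
rewrite N0 (countable_lebesgue_measure0 cZ) adde0 => A_le0.
by apply/eqP; rewrite eq_le A_le0 measure_ge0.
Qed.

Lemma measurable_I0pi (R : realType) : measurable (I0pi R).
Proof.
rewrite (_ : I0pi R = `[0, pi]%classic); first exact: measurable_itv.
by apply/seteqP; split => x /=; rewrite in_itv.
Qed.

Section Energies.
Variables (R : realType) (M d : nat) (gamma : R -> R).
Hypothesis d_even : ~~ odd d.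
Hypothesis gamma_ge0 : forall x, I0pi R x -> 0 <= gamma x.
Hypothesis gamma_int :
  lebesgue_measure.-integrable (I0pi R) (fun x => (gamma x)%:E).
Implicit Types a : 'I_(2 * M + 1) -> R.

Definition re_energy a : \bar R :=
  (\int[lebesgue_measure]_(x in I0pi R) (gamma x * spec_err_re d a x ^+ 2)%:E)%E.
Definition im_energy a : \bar R :=
  (\int[lebesgue_measure]_(x in I0pi R) (gamma x * stencil_sin a x ^+ 2)%:E)%E.

Lemma measurable_gamma : measurable_fun (I0pi R) gamma.
Proof. by apply/measurable_EFinP; case/integrableP: gamma_int. Qed.

Lemma measurable_stencil_sum (f : R -> R) a : continuous f ->
  measurable_fun setT (fun x => \sum_(i < 2 * M + 1) a i * f (offset M i * x)).
Proof.
move=> cf; apply: measurable_sum => i; apply: measurable_funM => //.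
apply: measurableT_comp (continuous_measurable_fun cf) _.
exact: mulrl_measurable.
Qed.

Lemma measurable_spec_err_re a : measurable_fun (I0pi R) (spec_err_re d a).
Proof.
apply: measurable_funTS; apply: measurable_funB; last first.
  by apply: measurable_funM => //; exact: measurable_funX.
exact: measurable_stencil_sum (@continuous_cos R).
Qed.

Lemma measurable_stencil_sin a : measurable_fun (I0pi R) (stencil_sin a).
Proof.
by apply: measurable_funTS; exact: measurable_stencil_sum (@continuous_sin R).
Qed.

Lemma objective_split a : objective M d gamma a = (re_energy a + im_energy a)%E.
Proof.
rewrite /objective -ge0_integralD //; first last.
- by apply/measurable_EFinP/measurable_funM;
    [exact: measurable_gamma | exact: measurable_funX (measurable_stencil_sin a)].
- by move=> x Ix; rewrite lee_fin mulr_ge0 ?gamma_ge0 ?sqr_ge0.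
- by apply/measurable_EFinP/measurable_funM;
    [exact: measurable_gamma | exact: measurable_funX (measurable_spec_err_re a)].
- by move=> x Ix; rewrite lee_fin mulr_ge0 ?gamma_ge0 ?sqr_ge0.
- exact: measurable_I0pi.
by apply: eq_integral => x _; rewrite spec_err_abs2E // mulrDr EFinD.
Qed.

Lemma objective_symmetrize a : objective M d gamma (symmetrize a) = re_energy a.
Proof.
apply: eq_integral => x _.
rewrite spec_err_abs2E // stencil_sin_symmetrize expr0n addr0.
by rewrite /spec_err_re stencil_cos_symmetrize.
Qed.

Lemma norm_spec_err_re_le a x : I0pi R x ->
  `|spec_err_re d a x| <= \sum_(i < 2 * M + 1) `|a i| + pi ^+ d.
Proof.
move=> /andP[x_ge0 x_lepi]; apply: le_trans (ler_normB _ _) (lerD _ _).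
  apply: le_trans (ler_norm_sum _ _ _) (ler_sum _ _) => i _.
  by rewrite normrM ler_piMr ?cos_max.
rewrite normrM normrX normrN1 expr1n mul1r normrX ger0_norm //.
by rewrite lerXn2r ?nnegrE ?pi_ge0.
Qed.

Lemma re_energy_fin_num a : re_energy a \is a fin_num.
Proof.
have bounded_re2 : [bounded spec_err_re d a x ^+ 2 | x in I0pi R].
  pose B : R := \sum_(i < 2 * M + 1) `|a i| + pi ^+ d.
  have le_B2 x : I0pi R x -> `|spec_err_re d a x ^+ 2| <= B ^+ 2.
    by move=> Ix; rewrite normrX !expr2 ler_pM ?normr_ge0 ?norm_spec_err_re_le.
  rewrite /bounded_near; near=> K => x Ix /=; apply: le_trans (le_B2 x Ix) _.
  near: K; exact/nbhs_pinfty_ge/num_real.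
have gh_int : lebesgue_measure.-integrable (I0pi R)
    (fun x => (gamma x)%:E * (spec_err_re d a x ^+ 2)%:E)%E.
  apply: integrableMl gamma_int _ bounded_re2; first exact: measurable_I0pi.
  exact: measurable_funX (measurable_spec_err_re a).
rewrite /re_energy; under eq_integral do rewrite EFinM.
apply: integrable_fin_num gh_int; exact: measurable_I0pi.
Unshelve. all: by end_near.
Qed.

Lemma im_energy_minimizer_eq0 (p : nat) astar :
  accuracy_constraints M d p astar ->
  (forall a, accuracy_constraints M d p a ->
     (objective M d gamma astar <= objective M d gamma a)%E) ->
  im_energy astar = 0%E.
Proof.
move=> acc astar_min.
have := astar_min _ (accuracy_constraints_symmetrize d_even acc).
rewrite objective_split objective_symmetrize -{2}[re_energy astar]adde0.
rewrite leeD2lE ?re_energy_fin_num // => im_le0.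
apply/eqP; rewrite eq_le im_le0 integral_ge0 // => x Ix.
by rewrite lee_fin mulr_ge0 ?gamma_ge0 ?sqr_ge0.
Qed.

End Energies.

Theorem lemma1 (R : realType) (d p M : nat) (gamma : R -> R)
  (astar : 'I_(2 * M + 1) -> R) :
  (2 <= d)%N -> ~~ odd d -> (1 <= M)%N -> (d + p + 1 <= 2 * M + 1)%N ->
  (forall x, I0pi R x -> 0 <= gamma x) ->
  lebesgue_measure.-integrable (I0pi R) (fun x => (gamma x)%:E) ->
  (0 < lebesgue_measure (I0pi R `&` [set x | (0 < gamma x)%R]))%E ->
  accuracy_constraints M d p astar ->
  (forall a : 'I_(2 * M + 1) -> R, accuracy_constraints M d p a ->
     (objective M d gamma astar <= objective M d gamma a)%E) ->
  forall eta : R, I0pi R eta -> complex.Im (spec_err M d astar eta) = 0.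
Proof.
(* The bounds on d, p and M only make the constraint set nonempty. *)
move=> _ d_even _ _ gamma_ge0 gamma_int gamma_pos acc astar_min eta _.
rewrite spec_errE //= stencil_sinE.
have [->|Q_neq0] := eqVneq (stencil_sin_poly astar) 0.
  by rewrite horner0 mulr0.
have mgamma := measurable_gamma gamma_int.
have im0 : (\int[lebesgue_measure]_(x in I0pi R)
              (gamma x * stencil_sin astar x ^+ 2)%:E)%E = 0
  := im_energy_minimizer_eq0 d_even gamma_ge0 gamma_int acc astar_min.
have [N [mN N0 subN]] := weighted_square_integral_eq0 (mu := lebesgue_measure)
  (@measurable_I0pi R) mgamma (measurable_stencil_sin astar) gamma_ge0 im0.
have mpos : measurable (I0pi R `&` [set x | 0 < gamma x]).
  rewrite -preimage_itvoy.
  by apply: mgamma; [exact: measurable_I0pi | exact: measurable_itv].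
suff : lebesgue_measure (I0pi R `&` [set x | 0 < gamma x]) = 0%E.
  by move=> pos0; rewrite pos0 ltxx in gamma_pos.
apply: lebesgue_measure_sub_null_countable mpos mN N0
  (finite_set_countable (sin_poly_cos_zeros_finite Q_neq0)) _.
move=> x [Ix gamma_x_gt0].
have [Nx|sin0] := subN x (conj Ix gamma_x_gt0); first by left.
by right; split; rewrite // -stencil_sinE.
Qed.
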